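(* Under the hypotheses and notation of the bridging theorem (two disjoint finite connected graphs $G_1=(V_1,E_1)$, $G_2=(V_2,E_2)$ with $n_i=|V_i|\ge2$, invertible distance matrices, total curvatures $k_i$, $Z=(2+k_1/n_1)(2+k_2/n_2)\neq4$, $K_{G_1}(u)\ne0$, $K_{G_2}(v)\neq0$, and $G$ obtained by adding the edge $\{u,v\}$, $u\in V_1$, $v\in V_2$), with $V=V_1\cup V_2$ and $\alpha=\frac{2(n_1+n_2)k_2}{n_1n_2(Z-4)}$, $\beta=\frac{2(n_1+n_2)k_1}{n_1n_2(Z-4)}$, we have $$K_G(V)=\frac{\alpha}{2}K_{G_1}(V_1)+\frac{\beta}{2}K_{G_2}(V_2)=\alpha K_{G_1}(V_1)=\beta K_{G_2}(V_2).$$ In particular, the total Steinerberger curvature of $G$ depends only on $n_1,n_2,k_1,k_2$ and not on the choice of the vertices $u\in V_1$, $v\in V_2$ joined by the bridge.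
   Context: All graphs are finite, simple, connected and undirected, with the combinatorial shortest-path distance $d$. For $G=(V,E)$ with $V=\{v_1,\dots,v_n\}$, let $D=(d(v_i,v_j))_{i,j=1}^n$ be its distance matrix and $\mathbf{1}_n\in\mathbb{R}^n$ the all-ones column vector. The Steinerberger curvature $K\in\mathbb{R}^n$ (written $K_i$ or $K(v_i)$) is defined as follows: if $DK=n\mathbf{1}_n$ has a unique solution, $K$ is that solution; if it has several solutions, $K$ is a solution for which $\min_i K_i$ is maximal; if it has no solution, $K=nD^\dagger\mathbf{1}_n$ with $D^\dagger$ the Moore–Penrose pseudoinverse. The total curvature of a vertex subset $W$ is $K(W)=\sum_{w\in W}K(w)$; $K_G$, $K_{G_1}$, $K_{G_2}$ denote the Steinerberger curvatures of $G$, $G_1$, $G_2$. *)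

From HB Require Import structures.
From mathcomp Require Import all_boot all_order all_algebra.
Set Implicit Arguments. Unset Strict Implicit. Unset Printing Implicit Defensive.
Import Order.TTheory GRing.Theory Num.Theory.
Local Open Scope ring_scope.

Definition simple_connected (n : nat) (e : rel 'I_n) : Prop :=
  symmetric e /\ irreflexive e /\ (forall x y, connect e x y).

Fixpoint reach (n : nat) (e : rel 'I_n) (k : nat) (x y : 'I_n) : bool :=
  match k with
  | 0 => x == y
  | k'.+1 => [exists z, reach e k' x z && e z y]
  end.

(* shortest-path distance: least k (< n) such that a walk of length k exists
   (for connected graphs this is always < n) *)
Definition gdist (n : nat) (e : rel 'I_n) (x y : 'I_n) : nat :=
  find (fun k => reach e k x y) (iota 0 n).

Definition distmx (R : pzRingType) (n : nat) (e : rel 'I_n) : 'M[R]_n :=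
  \matrix_(i, j) (gdist e i j)%:R.

(* B is a Moore-Penrose pseudoinverse of A (real case: transpose = adjoint) *)
Definition is_pinv (R : pzRingType) (n : nat) (A B : 'M[R]_n) : Prop :=
  [/\ A *m B *m A = A, B *m A *m B = B,
      (A *m B)^T = A *m B & (B *m A)^T = B *m A].

(* K is the Steinerberger curvature associated with the distance matrix D.
   "min_i K'_i <= min_i K_i" is written as: exists i, forall j, K' i <= K j. *)
Definition is_steinerberger_curvature (R : realFieldType) (n : nat)
    (D : 'M[R]_n) (K : 'cV[R]_n) : Prop :=
  let b : 'cV[R]_n := const_mx n%:R in
  (D *m K = b /\ (forall K', D *m K' = b -> K' = K))
  \/ (D *m K = b /\ (exists K', D *m K' = b /\ K' <> K) /\
      (forall K', D *m K' = b -> exists i, forall j, K' i 0 <= K j 0))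
  \/ ((forall K', D *m K' <> b) /\
      exists B, is_pinv D B /\ K = n%:R *: (B *m const_mx 1)).

Definition total_curv (R : pzRingType) (n : nat) (K : 'cV[R]_n) : R :=
  \sum_i K i 0.

Definition bridge (n1 n2 : nat) (e1 : rel 'I_n1) (e2 : rel 'I_n2)
    (u : 'I_n1) (v : 'I_n2) : rel 'I_(n1 + n2) :=
  fun x y =>
    match split x, split y with
    | inl a, inl b => e1 a b
    | inr a, inr b => e2 a b
    | inl a, inr b => (a == u) && (b == v)
    | inr a, inl b => (a == v) && (b == u)
    end.

(* Listing V = V1 + V2 with V1 first, distances across the bridge split as
   d(a, b) = d1(a, u) + 1 + d2(v, b), so the rows of D_G K = N 1 (N = n1 + n2)
   involve K only through its restrictions x, y to V1, V2, their sums
   Sx, Sy, and the moments P = sum_b d1(u, b) x_b, Q = sum_b d2(v, b) y_b.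
   Summing the V1-rows against K_{G1} (using D_{G1} K_{G1} = n1 1 and the
   symmetry of d1), the V2-rows against K_{G2}, and reading off rows u and v
   gives four linear relations from which
   (Sx + Sy) (k1 k2 + 2 n1 k2 + 2 n2 k1) = 2 N k1 k2,
   and the coefficient is n1 n2 (Z - 4).  The system is solvable (by a
   combination of K_{G1}, K_{G2} and the indicators of u and v), so in every
   case of the definition K_G is one of its solutions. *)

From HB Require Import structures.
From mathcomp Require Import all_boot all_order all_algebra.
From mathcomp Require Import zify ring lra.
Import Order.TTheory GRing.Theory Num.Theory.
Set Implicit Arguments. Unset Strict Implicit.

Section Walks.
Variables (n : nat) (e : rel 'I_n).

Lemma reach_cat a b x y z :
  reach e a x y -> reach e b y z -> reach e (a + b) x z.
Proof.
elim: b z => [|b IH] z /=; first by rewrite addn0 => H /eqP <-.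
move=> Ha /existsP[w /andP[Hw Hwz]]; rewrite addnS /=.
by apply/existsP; exists w; rewrite (IH _ Ha Hw).
Qed.

Lemma reach_edge x y : e x y -> reach e 1 x y.
Proof. by move=> H; apply/existsP; exists x; rewrite /= eqxx. Qed.

Lemma reach_path k x y :
  reach e k x y -> exists p, [/\ path e x p, last x p = y & size p = k].
Proof.
elim: k y => [|k IH] y /=; first by move=> /eqP <-; exists [::].
move=> /existsP[z /andP[/IH [p [Hp Hl Hs]] Hzy]].
exists (rcons p y); rewrite rcons_path last_rcons size_rcons Hp Hl Hzy Hs.
by split.
Qed.

Lemma path_reach x p : path e x p -> reach e (size p) x (last x p).
Proof.
elim: p x => [|y p IH] x /=; first by rewrite eqxx.
move=> /andP[Hxy Hp]; have := reach_cat (reach_edge Hxy) (IH _ Hp).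
by rewrite add1n.
Qed.

(* Removing the loops of a walk leaves a walk visiting each vertex once. *)
Lemma reach_shorten k x y :
  reach e k x y -> exists2 k', (k' <= k)%N /\ (k' < n)%N & reach e k' x y.
Proof.
move=> Hk; case: (ltnP k n) => Hkn; first by exists k.
have [p [Hp Hl Hs]] := reach_path Hk.
case: (shortenP Hp) Hl => p' Hp' Hu _ Hl.
exists (size p'); last by rewrite -Hl; apply: path_reach.
move/card_uniqP: Hu => Hcard; have := max_card (mem (x :: p')).
rewrite card_ord Hcard /= => Hmax; lia.
Qed.

Lemma gdist_min k x y : reach e k x y -> (gdist e x y <= k)%N.
Proof.
case/reach_shorten => k' [Hk' Hk'n] Hr; apply: leq_trans Hk'.
rewrite /gdist leqNgt; apply/negP => /(before_find 0).
by rewrite nth_iota // add0n Hr.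
Qed.

Lemma reach_gdist k x y : reach e k x y -> reach e (gdist e x y) x y.
Proof.
case/reach_shorten => k' [_ Hk'n] Hr.
have Hhas : has (fun k => reach e k x y) (iota 0 n).
  by apply/hasP; exists k'; rewrite // mem_iota.
have := nth_find 0 Hhas; rewrite has_find size_iota in Hhas.
by rewrite nth_iota.
Qed.

Lemma gdist_eq m x y : reach e m x y ->
  (forall k, reach e k x y -> m <= k)%N -> gdist e x y = m.
Proof.
move=> Hm Hmin; apply/eqP; rewrite eqn_leq (gdist_min Hm) Hmin //.
exact: reach_gdist Hm.
Qed.

Lemma gdist_xx x : gdist e x x = 0%N.
Proof. by apply: gdist_eq => //=; rewrite eqxx. Qed.

Lemma connect_reach x y : connect e x y -> exists k, reach e k x y.
Proof. by case/connectP => p Hp ->; exists (size p); apply: path_reach. Qed.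

Lemma reach_sym : symmetric e -> forall k x y, reach e k x y -> reach e k y x.
Proof.
move=> He; elim=> [|k IH] x y /=; first by rewrite eq_sym.
move=> /existsP[z /andP[Hxz Hzy]].
have := reach_cat (reach_edge (_ : e y z)) (IH _ _ Hxz); rewrite add1n; apply.
by rewrite He.
Qed.

Hypothesis connected_e : simple_connected e.

Lemma reach_gdist_connected x y : reach e (gdist e x y) x y.
Proof.
case: connected_e => _ [_ Hc]; have [k Hk] := connect_reach (Hc x y).
exact: reach_gdist Hk.
Qed.

Lemma gdist_sym x y : gdist e x y = gdist e y x.
Proof.
case: connected_e => He _; apply: gdist_eq.
  exact/(reach_sym He)/reach_gdist_connected.
by move=> k /(reach_sym He) /gdist_min.
Qed.

Lemma gdist_edge x w' w : e w' w -> (gdist e x w <= gdist e x w' + 1)%N.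
Proof.
by move=> Hw; apply/gdist_min/(reach_cat (reach_gdist_connected x w'))/reach_edge.
Qed.
End Walks.

Section BridgeDistances.
Variables (n1 n2 : nat) (e1 : rel 'I_n1) (e2 : rel 'I_n2).
Variables (u : 'I_n1) (v : 'I_n2).
Hypotheses (connected1 : simple_connected e1) (connected2 : simple_connected e2).
Local Notation E := (bridge e1 e2 u v).
Local Notation L := (@lshift n1 n2).
Local Notation Rs := (@rshift n1 n2).

Lemma split_lshift a : split (L a) = inl a.
Proof. exact: (unsplitK (inl a)). Qed.

Lemma split_rshift a : split (Rs a) = inr a.
Proof. exact: (unsplitK (inr a)). Qed.

Lemma reach_bridge_lshift k a b : reach e1 k a b -> reach E k (L a) (L b).
Proof.
elim: k b => [|k IH] b /=; first by move=> /eqP ->.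
move=> /existsP[w /andP[Hw Hwb]]; apply/existsP; exists (L w).
by rewrite IH //= /bridge !split_lshift.
Qed.

Lemma reach_bridge_rshift k a b : reach e2 k a b -> reach E k (Rs a) (Rs b).
Proof.
elim: k b => [|k IH] b /=; first by move=> /eqP ->.
move=> /existsP[w /andP[Hw Hwb]]; apply/existsP; exists (Rs w).
by rewrite IH //= /bridge !split_rshift.
Qed.

Lemma reach_bridge_from_lshift a k z : reach E k (L a) z ->
  match split z with
  | inl b => (gdist e1 a b <= k)%N
  | inr b => (gdist e1 a u + 1 + gdist e2 v b <= k)%N
  end.
Proof.
elim: k z => [|k IH] z /=; first by move=> /eqP <-; rewrite split_lshift gdist_xx.
move=> /existsP[z' /andP[/IH Hz' Hz]]; move: Hz Hz'; rewrite /bridge.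
case: (split z') => w'; case: (split z) => w.
- by move=> Hw H; apply: leq_trans (gdist_edge connected1 a Hw) _; lia.
- by move=> /andP[/eqP -> /eqP ->]; rewrite gdist_xx; lia.
- by move=> /andP[/eqP -> /eqP ->]; rewrite gdist_xx; lia.
- by move=> Hw H; have := gdist_edge connected2 v Hw; lia.
Qed.

Lemma reach_bridge_from_rshift a k z : reach E k (Rs a) z ->
  match split z with
  | inl b => (gdist e2 a v + 1 + gdist e1 u b <= k)%N
  | inr b => (gdist e2 a b <= k)%N
  end.
Proof.
elim: k z => [|k IH] z /=; first by move=> /eqP <-; rewrite split_rshift gdist_xx.
move=> /existsP[z' /andP[/IH Hz' Hz]]; move: Hz Hz'; rewrite /bridge.
case: (split z') => w'; case: (split z) => w.
- by move=> Hw H; have := gdist_edge connected1 u Hw; lia.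
- by move=> /andP[/eqP -> /eqP ->]; rewrite gdist_xx; lia.
- by move=> /andP[/eqP -> /eqP ->]; rewrite gdist_xx; lia.
- by move=> Hw H; apply: leq_trans (gdist_edge connected2 a Hw) _; lia.
Qed.

Lemma gdist_bridge_ll a b : gdist E (L a) (L b) = gdist e1 a b.
Proof.
apply: gdist_eq; first exact/reach_bridge_lshift/reach_gdist_connected.
by move=> k /reach_bridge_from_lshift; rewrite split_lshift.
Qed.

Lemma gdist_bridge_rr a b : gdist E (Rs a) (Rs b) = gdist e2 a b.
Proof.
apply: gdist_eq; first exact/reach_bridge_rshift/reach_gdist_connected.
by move=> k /reach_bridge_from_rshift; rewrite split_rshift.
Qed.

Lemma gdist_bridge_lr a b :
  gdist E (L a) (Rs b) = (gdist e1 a u + 1 + gdist e2 v b)%N.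
Proof.
apply: gdist_eq; last by move=> k /reach_bridge_from_lshift; rewrite split_rshift.
apply: reach_cat (reach_bridge_rshift (reach_gdist_connected connected2 v b)).
apply: reach_cat (reach_bridge_lshift (reach_gdist_connected connected1 a u)) _.
by apply: reach_edge; rewrite /bridge split_lshift split_rshift !eqxx.
Qed.

Lemma gdist_bridge_rl a b :
  gdist E (Rs a) (L b) = (gdist e2 a v + 1 + gdist e1 u b)%N.
Proof.
apply: gdist_eq; last by move=> k /reach_bridge_from_rshift; rewrite split_lshift.
apply: reach_cat (reach_bridge_lshift (reach_gdist_connected connected1 u b)).
apply: reach_cat (reach_bridge_rshift (reach_gdist_connected connected2 a v)) _.
by apply: reach_edge; rewrite /bridge split_lshift split_rshift !eqxx.
Qed.
End BridgeDistances.

Local Open Scope ring_scope.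

Lemma steinerberger_curvature_solves (R : realFieldType) n
    (D : 'M[R]_n) (K : 'cV[R]_n) :
  is_steinerberger_curvature D K ->
  (exists K' : 'cV[R]_n, D *m K' = const_mx n%:R) -> D *m K = const_mx n%:R.
Proof. by move=> [[H _]|[[H _]|[H _]]] // [K' /H]. Qed.

Lemma unitmx_mulmx_solvable (R : comUnitRingType) n
    (D : 'M[R]_n) (b : 'cV[R]_n) :
  D \in unitmx -> exists K : 'cV[R]_n, D *m K = b.
Proof. by move=> UD; exists (invmx D *m b); rewrite mulKVmx. Qed.

Lemma distmx_sym (R : pzRingType) n (e : rel 'I_n) :
  simple_connected e -> (distmx R e)^T = distmx R e.
Proof. by move=> He; apply/matrixP => i j; rewrite !mxE gdist_sym. Qed.

Lemma distmx_diag (R : pzRingType) n (e : rel 'I_n) i : distmx R e i i = 0.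
Proof. by rewrite mxE gdist_xx. Qed.

Lemma total_curv_col_mx (R : pzRingType) n1 n2 (x : 'cV[R]_n1) (y : 'cV[R]_n2) :
  total_curv (col_mx x y) = total_curv x + total_curv y.
Proof.
rewrite /total_curv big_split_ord.
by congr (_ + _); apply: eq_bigr => i _; rewrite ?col_mxEu ?col_mxEd.
Qed.

Section CurvatureWeights.
Variables (R : comPzRingType) (n : nat) (D : 'M[R]_n) (K : 'cV[R]_n) (c : R).
Hypotheses (D_sym : D^T = D) (DK : D *m K = const_mx c).

Lemma curv_weighted_sum (x : 'cV[R]_n) :
  \sum_i K i 0 * (D *m x) i 0 = c * total_curv x.
Proof.
have -> : \sum_i K i 0 * (D *m x) i 0 = (K^T *m (D *m x)) 0 0.
  by rewrite [RHS]mxE; apply: eq_bigr => i _; rewrite [K^T _ _]mxE.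
rewrite mulmxA -{1}D_sym -trmx_mul DK trmx_const mxE /total_curv mulr_sumr.
by apply: eq_bigr => i _; rewrite !mxE.
Qed.

Lemma curv_weighted_column (u : 'I_n) : \sum_i K i 0 * D i u = c.
Proof.
have := congr1 (fun M : 'cV[R]_n => M u 0) DK; rewrite !mxE => <-.
by apply: eq_bigr => i _; rewrite -{1}D_sym mxE mulrC.
Qed.

Lemma curv_weighted_rows (x : 'cV[R]_n) (u : 'I_n) (sy q N : R) :
  (forall i, (D *m x) i 0 + (D i u + 1) * sy + q = N) ->
  c * total_curv x + (c + total_curv K) * sy + total_curv K * q =
  N * total_curv K.
Proof.
move=> rows.
have <- : \sum_i K i 0 * ((D *m x) i 0 + (D i u + 1) * sy + q) = N * total_curv K.
  by rewrite /total_curv mulr_sumr; apply: eq_bigr => i _; rewrite rows mulrC.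
under eq_bigr do rewrite !mulrDr.
rewrite !big_split /= curv_weighted_sum.
have -> : \sum_i K i 0 * ((D i u + 1) * sy) = (c + total_curv K) * sy.
  rewrite -(curv_weighted_column u) /total_curv -big_split mulr_suml /=.
  by apply: eq_bigr => i _; rewrite mulrA mulrDr mulr1.
by rewrite /total_curv mulr_suml.
Qed.
End CurvatureWeights.

Section BridgeRows.
Variables (R : pzRingType) (n1 n2 : nat) (e1 : rel 'I_n1) (e2 : rel 'I_n2).
Variables (u : 'I_n1) (v : 'I_n2).
Hypotheses (connected1 : simple_connected e1) (connected2 : simple_connected e2).
Local Notation D1 := (distmx R e1).
Local Notation D2 := (distmx R e2).
Local Notation DG := (distmx R (bridge e1 e2 u v)).

Lemma distmx_bridge_row_lshift (x : 'cV[R]_n1) (y : 'cV[R]_n2) i :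
  (DG *m col_mx x y) (lshift n2 i) 0 =
  (D1 *m x) i 0 + (D1 i u + 1) * total_curv y + (D2 *m y) v 0.
Proof.
rewrite !mxE big_split_ord /= -addrA; congr (_ + _).
  by apply: eq_bigr => j _; rewrite col_mxEu !mxE gdist_bridge_ll.
rewrite /total_curv mulr_sumr -big_split /=; apply: eq_bigr => j _.
by rewrite col_mxEd !mxE gdist_bridge_lr // !natrD mulrDl.
Qed.

Lemma distmx_bridge_row_rshift (x : 'cV[R]_n1) (y : 'cV[R]_n2) i :
  (DG *m col_mx x y) (rshift n1 i) 0 =
  (D2 *m y) i 0 + (D2 i v + 1) * total_curv x + (D1 *m x) u 0.
Proof.
rewrite !mxE big_split_ord /= addrC -addrA; congr (_ + _).
  by apply: eq_bigr => j _; rewrite col_mxEd !mxE gdist_bridge_rr.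
rewrite /total_curv mulr_sumr -big_split /=; apply: eq_bigr => j _.
by rewrite col_mxEu !mxE gdist_bridge_rl // !natrD mulrDl.
Qed.
End BridgeRows.

Lemma total_curv_scale_sub_delta (R : pzRingType) n (K : 'cV[R]_n) a s u :
  total_curv (a *: K - s *: delta_mx u 0) = a * total_curv K - s.
Proof.
rewrite /total_curv; under eq_bigr do rewrite !mxE.
rewrite sumrB -!mulr_sumr; congr (_ - _).
by rewrite (bigD1 u) //= eqxx big1 ?addr0 ?mulr1 // => i /negbTE ->.
Qed.

Lemma bridge_moment_identity (R : realFieldType) (n1 n2 k1 k2 N sx sy p q : R) :
  n1 * sx + (n1 + k1) * sy + k1 * q = N * k1 ->
  n2 * sy + (n2 + k2) * sx + k2 * p = N * k2 ->
  p + sy + q = N -> q + sx + p = N ->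
  (sx + sy) * (k1 * k2 + 2 * n1 * k2 + 2 * n2 * k1) = 2 * N * k1 * k2.
Proof.
(* The claim is 2 k2 E1 + 2 k1 E2 - k1 k2 (E3 + E4). *)
move=> /(congr1 ( *%R (2 * k2))) E1 /(congr1 ( *%R (2 * k1))) E2.
by move=> /(congr1 ( *%R (k1 * k2))) E3 /(congr1 ( *%R (k1 * k2))) E4; lra.
Qed.

Section BridgeCurvature.
Variables (R : realFieldType) (n1 n2 : nat) (e1 : rel 'I_n1) (e2 : rel 'I_n2).
Variables (u : 'I_n1) (v : 'I_n2).
Hypotheses (connected1 : simple_connected e1) (connected2 : simple_connected e2).
Variables (K1 : 'cV[R]_n1) (K2 : 'cV[R]_n2).
Hypotheses (D1K1 : distmx R e1 *m K1 = const_mx n1%:R)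
  (D2K2 : distmx R e2 *m K2 = const_mx n2%:R).
Local Notation D1 := (distmx R e1).
Local Notation D2 := (distmx R e2).
Local Notation DG := (distmx R (bridge e1 e2 u v)).
Local Notation k1 := (total_curv K1).
Local Notation k2 := (total_curv K2).
Local Notation N := ((n1 + n2)%:R : R).
Local Notation bridge_det := (k1 * k2 + 2 * n1%:R * k2 + 2 * n2%:R * k1).

Lemma total_curv_bridge_solution (K : 'cV[R]_(n1 + n2)) :
  DG *m K = const_mx N -> total_curv K * bridge_det = 2 * N * k1 * k2.
Proof.
rewrite -[K]vsubmxK total_curv_col_mx; set x := usubmx K; set y := dsubmx K.
move=> DGK.
have rowL i : (D1 *m x) i 0 + (D1 i u + 1) * total_curv y + (D2 *m y) v 0 = N.
  by rewrite -distmx_bridge_row_lshift // DGK mxE.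
have rowR i : (D2 *m y) i 0 + (D2 i v + 1) * total_curv x + (D1 *m x) u 0 = N.
  by rewrite -distmx_bridge_row_rshift // DGK mxE.
apply: (bridge_moment_identity (p := (D1 *m x) u 0) (q := (D2 *m y) v 0)).
- exact (curv_weighted_rows (distmx_sym _ connected1) D1K1 rowL).
- exact (curv_weighted_rows (distmx_sym _ connected2) D2K2 rowR).
- by have := rowL u; rewrite distmx_diag add0r mul1r.
- by have := rowR v; rewrite distmx_diag add0r mul1r.
Qed.

(* The solution is a combination of K1, K2 and the indicators of u and v;
   the coefficients make both block sums equal to s and every row equal to
   a n1 + s + b n2 = N. *)
Lemma bridge_system_solvable :
  bridge_det != 0 -> exists K : 'cV[R]_(n1 + n2), DG *m K = const_mx N.
Proof.
move=> det_neq0.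
pose s := N * k1 * k2 / bridge_det.
pose a := 2 * N * k2 / bridge_det; pose b := 2 * N * k1 / bridge_det.
pose x := a *: K1 - s *: delta_mx u 0; pose y := b *: K2 - s *: delta_mx v 0.
have Sx : total_curv x = s.
  by rewrite total_curv_scale_sub_delta /a /s; field.
have Sy : total_curv y = s.
  by rewrite total_curv_scale_sub_delta /b /s; field.
have D1x i : (D1 *m x) i 0 = a * n1%:R - s * D1 i u.
  by rewrite mulmxBr -!scalemxAr -colE D1K1 !mxE.
have D2y i : (D2 *m y) i 0 = b * n2%:R - s * D2 i v.
  by rewrite mulmxBr -!scalemxAr -colE D2K2 !mxE.
have rowN : a * n1%:R + s + b * n2%:R = N by rewrite /a /b /s natrD; field.
exists (col_mx x y); apply/matrixP => i j; rewrite ord1 [RHS]mxE.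
case: (split_ordP i) => c ->.
- by rewrite distmx_bridge_row_lshift // D1x D2y Sy distmx_diag; lra.
- by rewrite distmx_bridge_row_rshift // D1x D2y Sx distmx_diag; lra.
Qed.
End BridgeCurvature.

Theorem mainTheorem6 (R : realFieldType) (n1 n2 : nat)
    (e1 : rel 'I_n1) (e2 : rel 'I_n2) (u : 'I_n1) (v : 'I_n2)
    (K1 : 'cV[R]_n1) (K2 : 'cV[R]_n2) (KG : 'cV[R]_(n1 + n2)) :
  (2 <= n1)%N -> (2 <= n2)%N ->
  simple_connected e1 -> simple_connected e2 ->
  distmx R e1 \in unitmx -> distmx R e2 \in unitmx ->
  is_steinerberger_curvature (distmx R e1) K1 ->
  is_steinerberger_curvature (distmx R e2) K2 ->
  is_steinerberger_curvature (distmx R (bridge e1 e2 u v)) KG ->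
  let k1 := total_curv K1 in
  let k2 := total_curv K2 in
  let Z := (2 + k1 / n1%:R) * (2 + k2 / n2%:R) in
  Z != 4 ->
  K1 u 0 != 0 -> K2 v 0 != 0 ->
  let alpha := 2 * (n1 + n2)%:R * k2 / (n1%:R * n2%:R * (Z - 4)) in
  let beta := 2 * (n1 + n2)%:R * k1 / (n1%:R * n2%:R * (Z - 4)) in
  total_curv KG = alpha / 2 * k1 + beta / 2 * k2 /\
  total_curv KG = alpha * k1 /\
  total_curv KG = beta * k2.
Proof.
move=> n1_ge2 n2_ge2 conn1 conn2 U1 U2 C1 C2 CG k1 k2 Z Z_neq4 _ _ alpha beta.
have n1_neq0 : n1%:R != 0 :> R by rewrite pnatr_eq0 -lt0n (leq_trans _ n1_ge2).
have n2_neq0 : n2%:R != 0 :> R by rewrite pnatr_eq0 -lt0n (leq_trans _ n2_ge2).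
have D1K1 := steinerberger_curvature_solves C1 (unitmx_mulmx_solvable _ U1).
have D2K2 := steinerberger_curvature_solves C2 (unitmx_mulmx_solvable _ U2).
have detE : n1%:R * n2%:R * (Z - 4) = k1 * k2 + 2 * n1%:R * k2 + 2 * n2%:R * k1.
  by rewrite /Z; field; rewrite n1_neq0 n2_neq0.
have det_neq0 : k1 * k2 + 2 * n1%:R * k2 + 2 * n2%:R * k1 != 0.
  by rewrite -detE !mulf_neq0 // subr_eq0.
have DGKG := steinerberger_curvature_solves CG
  (bridge_system_solvable u v conn1 conn2 D1K1 D2K2 det_neq0).
have totalE := total_curv_bridge_solution conn1 conn2 D1K1 D2K2 DGKG.
have KG_E : total_curv KG = 2 * (n1 + n2)%:R * k1 * k2 /
    (k1 * k2 + 2 * n1%:R * k2 + 2 * n2%:R * k1).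
  by apply: (canRL (mulfK det_neq0)).
rewrite /alpha /beta detE KG_E.
by split; [|split]; field.
Qed.
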